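(* Let $U(0)\geqslant 1$ and $d\geqslant 1$ be integers, $U(n)=U(0)+nd$, and let $S(n)=\overline{U(0)U(1)\cdots U(n-1)U(n)U(n-1)\cdots U(1)U(0)}$ for $n\geqslant 0$ (so $S(0)=U(0)$). Let $n\geqslant 0$ and put $$l=\left\lceil \log_{10}(n d + S(0) + 1)\right\rceil,\qquad t_l=\left\lfloor \frac{10^{l-1}-S(0)}{d}\right\rfloor .$$ Assume $t_l\geqslant 0$, $U(t_l)\geqslant 10^{l-1}$ and $U(t_l+2)<10^l$. Let $s_0=S(t_l)$, $s_1=S(t_l+1)$, $s_2=S(t_l+2)$, and $$\alpha_l=\frac{10^{3l}s_0-10^l(10^l+1)s_1+s_2}{(10^l+1)(10^l-1)^2},\qquad \mu_l=-\frac{10^{2l}s_0-(10^{2l}+1)s_1+s_2}{10^l(10^l-1)^2},$$ $$\theta_l=\frac{10^l s_0-(10^l+1)s_1+s_2}{10^l(10^l+1)(10^l-1)^2}.$$ Then $$S(n)=\alpha_l+\mu_l\,10^{l(n-t_l)}+\theta_l\,10^{2l(n-t_l)}.$$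
   Context: For positive integers $a_0,\ldots,a_k$, $\overline{a_0a_1\cdots a_k}$ denotes the integer whose decimal expansion is the decimal expansion of $a_0$ followed by that of $a_1$, ..., followed by that of $a_k$. Note $l$ is the number of decimal digits of $U(n)$; e.g. for $U(n)=n+1$ the sequence $S$ is $1,121,12321,1234321,\ldots$. *)

From mathcomp Require Import all_boot all_order all_algebra.
Set Implicit Arguments. Unset Strict Implicit. Unset Printing Implicit Defensive.
Import Order.TTheory GRing.Theory Num.Theory.

(* number of decimal digits of a positive integer a:
   the least e with a < 10^e (= ceil(log10(a+1))) *)
Definition ndigits (a : nat) : nat := up_log 10 a.+1.

Definition concat_digits (s : seq nat) : nat :=
  foldl (fun acc a => acc * 10 ^ ndigits a + a) 0 s.

Definition U (U0 d n : nat) : nat := U0 + n * d.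

Definition Spal (U0 d n : nat) : nat :=
  concat_digits ([seq U U0 d i | i <- iota 0 n] ++ [:: U U0 d n]
                 ++ rev [seq U U0 d i | i <- iota 0 n]).

From mathcomp Require Import all_boot all_order all_algebra.
From mathcomp Require Import ring.
Set Implicit Arguments. Unset Strict Implicit. Unset Printing Implicit Defensive.
Import Order.TTheory GRing.Theory Num.Theory.

(* Split S(k) as the ascending block A(k) = U(0)...U(k) followed by the
   descending block D(k) = U(k-1)...U(0), of W(k) digits.  While every U(j)
   has exactly l digits, x := 10^l satisfies A(k+1) = x A(k) + U(k+1),
   D(k+1) = D(k) + U(k) 10^W(k) and 10^W(k+1) = x 10^W(k).  Solving these
   recurrences, the terms m x^m cancel and S(t+m) = P + Q x^m + T x^(2m).
   The hypotheses on t_l put t_l, t_l+1, t_l+2 and n in one such window, and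
   s_0, s_1, s_2 determine P, Q, T by interpolation at 1, x, x^2. *)

Definition width (s : seq nat) : nat := sumn (map ndigits s).

Lemma foldl_concat_digits (a : nat) (s : seq nat) :
  foldl (fun acc a => acc * 10 ^ ndigits a + a) a s =
  a * 10 ^ width s + concat_digits s.
Proof.
elim: s a => [|x s IH] a; first by rewrite /concat_digits /= muln1 addn0.
by rewrite /= IH [in RHS]/concat_digits /= IH expnD mulnDl mulnA addnA.
Qed.

Lemma concat_digits_cat (s t : seq nat) :
  concat_digits (s ++ t) = concat_digits s * 10 ^ width t + concat_digits t.
Proof. by rewrite {1}/concat_digits foldl_cat foldl_concat_digits. Qed.

Lemma concat_digits1 (x : nat) : concat_digits [:: x] = x.
Proof. by rewrite /concat_digits /= mul0n add0n. Qed.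

Definition terms (U0 d k : nat) : seq nat := [seq U U0 d i | i <- iota 0 k].
Definition ascending (U0 d k : nat) : nat := concat_digits (terms U0 d k.+1).
Definition descending (U0 d k : nat) : nat := concat_digits (rev (terms U0 d k)).

Lemma termsS (U0 d k : nat) : terms U0 d k.+1 = terms U0 d k ++ [:: U U0 d k].
Proof. by rewrite /terms -addn1 iotaD map_cat. Qed.

Lemma width_termsS (U0 d k : nat) :
  width (terms U0 d k.+1) = width (terms U0 d k) + ndigits (U U0 d k).
Proof. by rewrite termsS /width map_cat sumn_cat /= addn0. Qed.

Lemma ascendingS (U0 d k : nat) :
  ascending U0 d k.+1 = ascending U0 d k * 10 ^ ndigits (U U0 d k.+1) + U U0 d k.+1.
Proof. by rewrite /ascending termsS concat_digits_cat concat_digits1 /width /= addn0. Qed.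

Lemma descendingS (U0 d k : nat) :
  descending U0 d k.+1 =
  U U0 d k * 10 ^ width (terms U0 d k) + descending U0 d k.
Proof.
rewrite /descending termsS rev_cat /= -cat1s concat_digits_cat concat_digits1.
by rewrite /width map_rev sumn_rev.
Qed.

Lemma SpalE (U0 d k : nat) :
  Spal U0 d k = ascending U0 d k * 10 ^ width (terms U0 d k) + descending U0 d k.
Proof.
by rewrite /Spal catA -termsS concat_digits_cat /width map_rev sumn_rev.
Qed.

Lemma Spal0 (U0 d : nat) : Spal U0 d 0 = U0.
Proof. by rewrite /Spal /= concat_digits1 /U mul0n addn0. Qed.

Lemma leq_U (U0 d j k : nat) : (j <= k)%N -> (U U0 d j <= U U0 d k)%N.
Proof. by move=> jk; rewrite leq_add2l leq_mul2r jk orbT. Qed.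

Lemma ndigits_eq (a l : nat) :
  (0 < l)%N -> (10 ^ l.-1 <= a < 10 ^ l)%N -> ndigits a = l.
Proof.
move=> l_gt0 /andP[lo hi]; rewrite /ndigits -(prednK l_gt0) in hi *.
by apply: up_log_eq; rewrite // ltnS lo.
Qed.

Lemma ndigits_U_window (U0 d l i k j : nat) : (0 < l)%N ->
  (10 ^ l.-1 <= U U0 d i)%N -> (U U0 d k < 10 ^ l)%N -> (i <= j <= k)%N ->
  ndigits (U U0 d j) = l.
Proof.
move=> l_gt0 lo hi /andP[ij jk]; apply: ndigits_eq => //.
by rewrite (leq_trans lo) ?leq_U // (leq_ltn_trans _ hi) ?leq_U.
Qed.

Lemma floor_sub_div_le (a b d : nat) : (0 < d)%N ->
  let f := Num.floor ((a%:R - b%:R) / d%:R : rat) in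
  (0 <= f)%R -> (`|f| * d + b <= a)%N.
Proof.
move=> d_gt0 f f_ge0; have := floor_le ((a%:R - b%:R) / d%:R : rat).
rewrite -/f -(gez0_abs f_ge0) ler_pdivlMr ?ltr0n // lerBrDr.
by rewrite -natrM -natrD ler_nat.
Qed.

Lemma window_start_le (U0 d n : nat) : (0 < U0)%N -> (0 < d)%N ->
  let l := up_log 10 (n * d + U0 + 1) in
  let tl := Num.floor (((10 ^ l.-1)%:R - U0%:R) / d%:R : rat) in
  (0 <= tl)%R -> (`|tl| <= n)%N.
Proof.
move=> U0_gt0 d_gt0 l tl tl_ge0.
have U0_lt : (1 < n * d + U0 + 1)%N by rewrite addn1 ltnS ltn_addl.
have := leq_ltn_trans (floor_sub_div_le d_gt0 tl_ge0) (up_log_gtn (isT : 1 < 10)%N U0_lt).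
by rewrite addn1 ltnS => ?; rewrite -(leq_pmul2r d_gt0) -(leq_add2r U0).
Qed.

Local Open Scope ring_scope.

Lemma expr10_gt1 (R : numDomainType) (l : nat) : (0 < l)%N -> 1 < (10 : R) ^+ l.
Proof. by move=> l_gt0; rewrite exprn_egt1 ?ltr1n // -lt0n. Qed.

Lemma quadratic_interpolation_geometric (F : fieldType) (L P Q T y : F) :
  L != 0 -> L - 1 != 0 -> L + 1 != 0 ->
  let q z := P + Q * z + T * z ^+ 2 in
  q y =
  (L ^+ 3 * q 1 - L * (L + 1) * q L + q (L ^+ 2)) / ((L + 1) * (L - 1) ^+ 2) +
  - ((L ^+ 2 * q 1 - (L ^+ 2 + 1) * q L + q (L ^+ 2)) / (L * (L - 1) ^+ 2)) * y +
  (L * q 1 - (L + 1) * q L + q (L ^+ 2)) / (L * (L + 1) * (L - 1) ^+ 2) * y ^+ 2.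
Proof. by move=> L0 L1 L2 q; rewrite /q; field; rewrite L0 L1 L2. Qed.

Section ConstantWidth.

Variables (U0 d l t K : nat).
Hypothesis l_gt0 : (0 < l)%N.
Hypothesis ndigits_window : forall j, (t <= j <= K)%N -> ndigits (U U0 d j) = l.

Local Notation x := ((10 : rat) ^+ l).
Let a : rat := (U U0 d t)%:R.
Let v : rat := d%:R.
Let c : rat := (10 ^ width (terms U0 d t))%:R.

(* A + B m + C x^m solves A(t+m+1) = x A(t+m) + a + (m+1) v and
   E + F x^m + G m x^m solves D(t+m+1) = D(t+m) + (a + m v) c x^m;
   since B c + G = 0, the terms m x^m cancel in S(t+m). *)
Let B : rat := v / (1 - x).
Let A : rat := (a + v - B) / (1 - x).
Let C : rat := (ascending U0 d t)%:R - A.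
Let G : rat := v * c / (x - 1).
Let F : rat := (a * c - G * x) / (x - 1).
Let E : rat := (descending U0 d t)%:R - F.

Let x_neq1 : x - 1 != 0.
Proof. by rewrite subr_eq0 gt_eqF // expr10_gt1. Qed.

Let U_window (m : nat) : (U U0 d (t + m))%:R = a + m%:R * v.
Proof. by rewrite /a /v /U !natrD !natrM natrD; ring. Qed.

Lemma width_window (m : nat) : (t + m <= K)%N ->
  (10 ^ width (terms U0 d (t + m)))%:R = c * x ^+ m.
Proof.
elim: m => [|m IH] tmK; first by rewrite addn0 mulr1.
have tmK' : (t + m <= K)%N by rewrite (leq_trans _ tmK) // addnS.
rewrite addnS width_termsS expnD natrM IH // natrX ndigits_window ?leq_addr //.
by rewrite exprS; ring.
Qed.

Lemma ascending_window (m : nat) : (t + m <= K)%N ->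
  (ascending U0 d (t + m))%:R = A + B * m%:R + C * x ^+ m.
Proof.
elim: m => [|m IH] tmK; first by rewrite addn0 /C; ring.
have tmK' : (t + m <= K)%N by rewrite (leq_trans _ tmK) // addnS.
rewrite addnS ascendingS natrD natrM IH // -addnS U_window.
rewrite natrX ndigits_window ?leq_addr // exprS -[m.+1]addn1 natrD /C /A /B.
by field; rewrite -opprB oppr_eq0 x_neq1.
Qed.

Lemma descending_window (m : nat) : (t + m <= K)%N ->
  (descending U0 d (t + m))%:R = E + F * x ^+ m + G * m%:R * x ^+ m.
Proof.
elim: m => [|m IH] tmK; first by rewrite addn0 /E; ring.
have tmK' : (t + m <= K)%N by rewrite (leq_trans _ tmK) // addnS.
rewrite addnS descendingS natrD natrM IH // width_window // U_window.
by rewrite exprS -[m.+1]addn1 natrD /E /F /G; field.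
Qed.

Lemma Spal_window : exists P Q T : rat, forall m, (t + m <= K)%N ->
  (Spal U0 d (t + m))%:R = P + Q * x ^+ m + T * (x ^+ m) ^+ 2.
Proof.
exists E, (c * A + F), (c * C) => m tmK.
rewrite SpalE natrD natrM ascending_window // descending_window // width_window //.
by rewrite /E /F /G /C /A /B; field; rewrite x_neq1 -opprB oppr_eq0 x_neq1.
Qed.

End ConstantWidth.

Theorem theorem3 (U0 d n : nat) (hU0 : (1 <= U0)%N) (hd : (1 <= d)%N) :
  let S0 := Spal U0 d 0 in
  (* l = ceil(log10(n d + S(0) + 1)) : least l with n d + S(0) + 1 <= 10^l *)
  let l := up_log 10 (n * d + S0 + 1) in
  let tl : int := Num.floor (((10 ^ l.-1)%:R - S0%:R) / d%:R : rat) in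
  0 <= tl ->
  ((10 ^ l.-1)%N <= U U0 d `|tl|)%N ->
  (U U0 d (`|tl|.+2) < 10 ^ l)%N ->
  let s0 : rat := (Spal U0 d `|tl|)%:R in
  let s1 : rat := (Spal U0 d `|tl|.+1)%:R in
  let s2 : rat := (Spal U0 d `|tl|.+2)%:R in
  let L : rat := 10 ^+ l in
  let alpha := (L ^+ 3 * s0 - L * (L + 1) * s1 + s2) / ((L + 1) * (L - 1) ^+ 2) in
  let mu := - ((L ^+ 2 * s0 - (L ^+ 2 + 1) * s1 + s2) / (L * (L - 1) ^+ 2)) in
  let theta := (L * s0 - (L + 1) * s1 + s2) / (L * (L + 1) * (L - 1) ^+ 2) in
  let e : int := (l%:Z * (n%:Z - tl))%R in
  (Spal U0 d n)%:R = alpha + mu * (10 : rat) ^ e + theta * (10 : rat) ^ (2 * e).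
Proof.
rewrite Spal0 => S0 l tl tl_ge0 Ut_lo Ut2_hi s0 s1 s2 L alpha mu theta e.
set t := `|tl|%N.
have l_gt0 : (0 < l)%N by rewrite up_log_gt0 /= addn1 ltnS ltn_addl.
have Un_hi : (U U0 d n < 10 ^ l)%N by rewrite /U addnC -addn1 up_logP.
have t_le_n : (t <= n)%N by apply: window_start_le.
have [|P [Q [T SpalE]]] := @Spal_window U0 d l t (maxn n t.+2) l_gt0.
  move=> j; apply: ndigits_U_window l_gt0 Ut_lo _.
  by rewrite /maxn; case: ifP.
have L_gt1 : 1 < L by apply: expr10_gt1.
have -> : (Spal U0 d n)%:R = P + Q * L ^+ (n - t) + T * (L ^+ (n - t)) ^+ 2.
  by rewrite -{1}(subnKC t_le_n) SpalE // subnKC // leq_maxl.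
have e_nat : e = (l * (n - t))%N by rewrite /e -(gez0_abs tl_ge0) subzn.
have Spal_at k : (k <= 2)%N -> (Spal U0 d (t + k))%:R = P + Q * L ^+ k + T * (L ^+ k) ^+ 2.
  by move=> k_le2; rewrite SpalE // (leq_trans _ (leq_maxr _ _)) // -addn2 leq_add2l.
rewrite /alpha /mu /theta /s0 /s1 /s2.
move: (Spal_at 0%N isT) (Spal_at 1%N isT) (Spal_at 2%N isT).
rewrite addn0 addn1 addn2 => -> -> ->.
have e2_nat : 2 * e = (l * (n - t) * 2)%N by rewrite e_nat mulrC -PoszM.
rewrite e2_nat e_nat -!exprnP !exprM -/L expr0 expr1.
apply: quadratic_interpolation_geometric.
- by rewrite gt_eqF // (lt_trans ltr01).
- by rewrite subr_eq0 gt_eqF.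
- by rewrite gt_eqF // addr_gt0 // (lt_trans ltr01).
Qed.
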